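(* For every $\varepsilon>0$ there exists a positive integer $L$ such that for all sufficiently large $N$, $$\sum_{k=L}^N P\big(R_{k,N}\ge N^{1-r}\big)<\varepsilon.$$
   Context: Fix $r\in(0,1)$. Multitype Yule process: at time $0$ a single individual of type $1$ is born; no deaths; each individual independently gives birth at rate $1$; a newborn has, independently, its parent's type with probability $1-r$ and otherwise a brand-new type. Individuals are numbered in order of birth (the initial one is the 1st); if the $k$-th individual born has a type different from its parent, that type is called type $k$. $T_N$ is the time the population reaches size $N$, and $R_{k,N}$ is the number of type-$k$ individuals at time $T_N$. *)

From HB Require Import structures.
From mathcomp Require Import all_boot all_order all_algebra.
From mathcomp Require Import reals exp.
Set Implicit Arguments. Unset Strict Implicit. Unset Printing Implicit Defensive.
Import Order.TTheory GRing.Theory Num.Theory.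
Local Open Scope ring_scope.

(* Embedded jump chain of the multitype Yule process, observed at T_N.
   Individuals are indexed 0..N-1 (index i = the (i+1)-th individual born).
   An outcome is (par, mu): par i is the parent of individual i (i > 0,
   uniform among the i earlier individuals), mu i says whether individual i
   got a brand-new type (probability r, independently). Individual 0 is the
   initial individual (par 0 = 0, mu 0 = false by convention). *)

Definition yule_weight (R : realType) (r : R) (N : nat)
  (par : {ffun 'I_N -> 'I_N}) (mu : {ffun 'I_N -> bool}) : R :=
  \prod_(i < N)
    (if nat_of_ord i == 0%N then
       ((nat_of_ord (par i) == 0%N)%:R * (~~ mu i)%:R)
     else
       ((nat_of_ord (par i) < nat_of_ord i)%N%:R / (nat_of_ord i)%:R
        * (if mu i then r else 1 - r))).

Fixpoint founder (N : nat) (par : 'I_N -> 'I_N) (mu : 'I_N -> bool)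
  (fuel : nat) (i : 'I_N) : 'I_N :=
  match fuel with
  | 0 => i
  | f.+1 => if (nat_of_ord i == 0%N) || mu i then i else founder par mu f (par i)
  end.

(* R_{k,N}: number of individuals of type k (k is 1-indexed as in the paper:
   type k is the type whose founder is the k-th individual born) at time T_N *)
Definition Rkn (N : nat) (par : {ffun 'I_N -> 'I_N}) (mu : {ffun 'I_N -> bool})
  (k : nat) : nat :=
  #|[pred i : 'I_N | (nat_of_ord (founder par mu N i)).+1 == k]|.

Definition yule_prob (R : realType) (r : R) (N : nat)
  (E : {ffun 'I_N -> 'I_N} -> {ffun 'I_N -> bool} -> bool) : R :=
  \sum_(par : {ffun 'I_N -> 'I_N}) \sum_(mu : {ffun 'I_N -> bool})
     yule_weight r par mu * (E par mu)%:R.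

(* Fix K >= 1 and let X_n count the individuals, among the first n, whose type
   was founded by the individual of index K (the (K+1)-th born).  Individual
   n >= 1 picks a uniform parent among the first n and mutates with probability
   r, so X behaves like a Polya urn: its rising factorial moments satisfy
     E[X_(K+1)^(m)] = r m!,   E[X_(n+1)^(m)] = (1 + (1-r) m / n) E[X_n^(m)]
   for n > K.
   As 1 + a/n <= (n/(n-1))^a, the product telescopes to
   E[R_(K+1,N)^(m)] <= m! ((N-1)/K)^((1-r) m), and Markov's inequality gives
   P(R_(K+1,N) >= N^(1-r)) <= m! / K^((1-r) m) <= m! / K^2 once (1-r) m >= 2.
   The sum of these bounds over K > M is at most m!/M, below eps for large M. *)

From HB Require Import structures.
From mathcomp Require Import all_boot all_order all_algebra.
From mathcomp Require Import reals sequences exp.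
From mathcomp Require Import ring.
Import Order.TTheory GRing.Theory Num.Theory.
Set Implicit Arguments. Unset Strict Implicit. Unset Printing Implicit Defensive.
Local Open Scope ring_scope.

Definition ffun_upd (I : finType) (J : Type) (f : {ffun I -> J}) (j : I) (x : J) :
  {ffun I -> J} := [ffun i => if i == j then x else f i].

Section FfunUpdate.
Variables (I : finType) (J : Type).
Implicit Types (f : {ffun I -> J}) (i j : I) (x y : J).

Lemma ffun_upd_at f j x : ffun_upd f j x j = x.
Proof. by rewrite ffunE eqxx. Qed.

Lemma ffun_upd_ne f j x i : i != j -> ffun_upd f j x i = f i.
Proof. by rewrite ffunE => /negPf ->. Qed.

Lemma ffun_upd_upd f j x y : ffun_upd (ffun_upd f j x) j y = ffun_upd f j y.
Proof. by apply/ffunP => i; rewrite !ffunE; case: eqP. Qed.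

Lemma ffun_upd_id f j : ffun_upd f j (f j) = f.
Proof. by apply/ffunP => i; rewrite ffunE; case: eqP => [->|]. Qed.

End FfunUpdate.

Lemma sum_nat_indicator (R : pzSemiRingType) (T : finType) (P : pred T) :
  \sum_(i : T) (P i)%:R = #|P|%:R :> R.
Proof.
rewrite -sum1_card natr_sum [RHS]big_mkcond.
by apply: eq_bigr => i _; rewrite unfold_in; case: (P i).
Qed.

Lemma sum_ord_lt (R : pzSemiRingType) N n : (n <= N)%N ->
  \sum_(p : 'I_N) (p < n)%N%:R = n%:R :> R.
Proof.
move=> le_nN; rewrite -[in RHS](card_ord n) -sumr_const.
rewrite (big_ord_widen N (fun _ => 1) le_nN) [RHS]big_mkcond /=.
by apply: eq_bigr => p _; case: ifP.
Qed.

Lemma sum_ord_lt_div (R : numFieldType) N n (x : R) : (0 < n <= N)%N ->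
  \sum_(p : 'I_N) (p < n)%N%:R / n%:R * x = x.
Proof.
case/andP=> n_gt0 le_nN.
by rewrite -big_distrl -big_distrl /= sum_ord_lt // divff ?mul1r // pnatr_eq0 -lt0n.
Qed.

Section ProductWeight.
Variables (R : comPzSemiRingType) (I J : finType) (w : I -> J -> R).

Definition prod_weight (f : {ffun I -> J}) : R := \prod_i w i (f i).

Lemma sum_prod_weight : (forall i, \sum_x w i x = 1) ->
  \sum_(f : {ffun I -> J}) prod_weight f = 1.
Proof. by move=> w1; rewrite -bigA_distr_bigA big1. Qed.

Lemma prod_weight_upd f j x :
  prod_weight (ffun_upd f j x) * w j (f j) = w j x * prod_weight f.
Proof.
rewrite /prod_weight (bigD1 j) //= [in RHS](bigD1 j) //= ffun_upd_at mulrAC mulrA.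
congr (_ * _).
by apply: eq_bigr => i ij; rewrite ffun_upd_ne.
Qed.

(* (f, x) |-> (f[j := x], f j) is an involution of {ffun I -> J} * J that
   preserves the weight prod_weight f * w j x. *)
Lemma sum_prod_weight_resample j (F : {ffun I -> J} -> R) : \sum_x w j x = 1 ->
  \sum_f prod_weight f * F f =
  \sum_f prod_weight f * \sum_x w j x * F (ffun_upd f j x).
Proof.
move=> w1; pose h (p : {ffun I -> J} * J) := (ffun_upd p.1 j p.2, p.1 j).
have hK : involutive h.
  by case=> f x; rewrite /h /= ffun_upd_upd ffun_upd_id ffun_upd_at.
under [RHS]eq_bigr do rewrite mulr_sumr.
rewrite pair_bigA (reindex_inj (inv_inj hK)) /=.
under [RHS]eq_bigr do rewrite ffun_upd_upd ffun_upd_id mulrA prod_weight_upd.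
rewrite -(pair_bigA _ (fun f x => w j x * prod_weight f * F f)) /=.
by apply: eq_bigr => f _; rewrite -!big_distrl /= w1 mul1r.
Qed.

End ProductWeight.

Arguments sum_prod_weight_resample {R I J w} j F.

Definition parents_precede N (par : {ffun 'I_N -> 'I_N}) : Prop :=
  forall i : 'I_N, (0 < i)%N -> (par i < i)%N.

Section Founder.
Variables (N : nat) (par : {ffun 'I_N -> 'I_N}) (mu : {ffun 'I_N -> bool}).
Hypothesis par_lt : parents_precede par.
Implicit Types i : 'I_N.

Lemma founder_le fuel i : (founder par mu fuel i <= i)%N.
Proof.
elim: fuel i => [|fuel IH] i //=; case: ifP => // /norP[i_neq0 _].
by apply: leq_trans (IH _) (ltnW (par_lt _)); rewrite lt0n.
Qed.

Lemma founder_fuel f1 f2 i : (i <= f1)%N -> (i <= f2)%N ->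
  founder par mu f1 i = founder par mu f2 i.
Proof.
elim: f1 f2 i => [|f1 IH] [|f2] i //=; rewrite ?leqn0.
- by move=> /eqP i0; rewrite i0.
- by move=> _ /eqP i0; rewrite i0.
case: ifP => // /norP[i_neq0 _] le_if1 le_if2.
have lt_pi : (par i < i)%N by apply: par_lt; rewrite lt0n.
by apply: IH; rewrite -ltnS; apply: leq_trans lt_pi _.
Qed.

Lemma founderE i : founder par mu N i =
  if (i == 0 :> nat) || mu i then i else founder par mu N (par i).
Proof.
rewrite (@founder_fuel N i.+1) ?(ltnW (ltn_ord i)) //=.
case: ifP => // /norP[i_neq0 _].
have lt_pi : (par i < i)%N by apply: par_lt; rewrite lt0n.
by apply: founder_fuel; apply: ltnW; [|apply: ltn_trans (ltn_ord i)].
Qed.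

Lemma parents_precede_upd (n p : 'I_N) : (p < n)%N ->
  parents_precede (ffun_upd par n p).
Proof. by move=> lt_pn i i_gt0; rewrite ffunE; case: eqP => [->|_] //; apply: par_lt. Qed.

Lemma founder_upd_lt (n p : 'I_N) b fuel i : (i < n)%N ->
  founder (ffun_upd par n p) (ffun_upd mu n b) fuel i = founder par mu fuel i.
Proof.
elim: fuel i => [|fuel IH] i //= lt_in.
have i_neq_n : i != n by rewrite neq_ltn lt_in.
rewrite !ffun_upd_ne //; case: ifP => // /norP[i_neq0 _].
by apply: IH; apply: ltn_trans lt_in; apply: par_lt; rewrite lt0n.
Qed.

End Founder.

Lemma founder_upd_at N (par : {ffun 'I_N -> 'I_N}) mu (n p : 'I_N) b :
  parents_precede par -> (0 < n)%N -> (p < n)%N ->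
  founder (ffun_upd par n p) (ffun_upd mu n b) N n = if b then n else founder par mu N p.
Proof.
move=> par_lt n_gt0 lt_pn; rewrite founderE; last exact: parents_precede_upd.
rewrite !ffun_upd_at.
move: n_gt0; rewrite lt0n => /negbTE -> /=.
by case: b => //; apply: founder_upd_lt.
Qed.

Definition type_count N (par : {ffun 'I_N -> 'I_N}) (mu : {ffun 'I_N -> bool})
  (K n : nat) : nat :=
  #|[pred i : 'I_N | (i < n)%N && (founder par mu N i == K :> nat)]|.

Section TypeCount.
Variables (N : nat) (par : {ffun 'I_N -> 'I_N}) (mu : {ffun 'I_N -> bool}) (K : nat).

Lemma Rkn_type_count : Rkn par mu K.+1 = type_count par mu K N.
Proof. by apply: eq_card => i; rewrite !inE ltn_ord eqSS. Qed.

Lemma type_count_S n (lt_nN : (n < N)%N) : type_count par mu K n.+1 =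
  (type_count par mu K n + (founder par mu N (Ordinal lt_nN) == K :> nat))%N.
Proof.
rewrite /type_count (cardD1 (Ordinal lt_nN)) inE /= ltnSn /= addnC; congr (_ + _)%N.
apply: eq_card => i; rewrite !inE ltnS leq_eqVlt.
have -> : (i == Ordinal lt_nN) = (nat_of_ord i == n) by [].
by case: eqP => //= ->; rewrite ltnn.
Qed.

Hypothesis par_lt : parents_precede par.

Lemma type_count_upd (n p : 'I_N) b :
  type_count (ffun_upd par n p) (ffun_upd mu n b) K n = type_count par mu K n.
Proof.
by apply: eq_card => i; rewrite !inE; case: ltnP => //= lt_in; rewrite founder_upd_lt.
Qed.

Lemma type_count_self : type_count par mu K K = 0%N.
Proof.
apply: eq_card0 => i; rewrite !inE; apply/negP => /andP[lt_iK /eqP fK].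
by have := founder_le mu par_lt N i; rewrite fK leqNgt lt_iK.
Qed.

End TypeCount.

Section YuleExpectation.
Variables (R : realType) (r : R) (N : nat).
Implicit Types (par : {ffun 'I_N -> 'I_N}) (mu : {ffun 'I_N -> bool}).

Definition parent_weight (i p : 'I_N) : R :=
  if i == 0 :> nat then (p == 0 :> nat)%:R else (p < i)%N%:R / i%:R.

Definition mutation_weight (i : 'I_N) (b : bool) : R :=
  if i == 0 :> nat then (~~ b)%:R else if b then r else 1 - r.

Lemma yule_weightE par mu : yule_weight r par mu =
  prod_weight parent_weight par * prod_weight mutation_weight mu.
Proof.
rewrite /prod_weight -big_split; apply: eq_bigr => i _.
by rewrite /parent_weight /mutation_weight; case: ifP.
Qed.

Lemma parent_weightE (i p : 'I_N) : (0 < i)%N ->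
  parent_weight i p = (p < i)%N%:R / i%:R.
Proof. by rewrite /parent_weight lt0n => /negbTE ->. Qed.

Lemma sum_parent_weight i : \sum_p parent_weight i p = 1.
Proof.
have [i0|i_gt0] := posnP i.
  under eq_bigr do rewrite /parent_weight i0 eqxx.
  rewrite (bigD1 i) //= i0 eqxx -[RHS]addr0; congr (_ + _).
  apply: big1 => p ne_pi; case: eqP => // p0.
  by case/negP: ne_pi; apply/eqP/val_inj; rewrite /= p0 i0.
under eq_bigr do rewrite parent_weightE //.
by rewrite -big_distrl /= sum_ord_lt ?divff ?pnatr_eq0 -?lt0n // ltnW.
Qed.

Lemma sum_mutation_weight i : \sum_b mutation_weight i b = 1.
Proof.
rewrite big_bool /mutation_weight; case: ifP => _ /=; first by rewrite add0r.
by rewrite addrCA subrr addr0.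
Qed.

Lemma mutation_weightE (i : 'I_N) b : (0 < i)%N ->
  mutation_weight i b = if b then r else 1 - r.
Proof. by rewrite /mutation_weight lt0n => /negbTE ->. Qed.

Lemma yule_weight_parents_precede par mu :
  yule_weight r par mu != 0 -> parents_precede par.
Proof.
rewrite yule_weightE mulf_eq0 negb_or => /andP[/prodf_neq0 w_neq0 _] i i_gt0.
move: (w_neq0 i isT); rewrite parent_weightE //.
by case: ltnP => //; rewrite mul0r eqxx.
Qed.

Definition yule_expect (F : {ffun 'I_N -> 'I_N} -> {ffun 'I_N -> bool} -> R) : R :=
  \sum_par \sum_mu yule_weight r par mu * F par mu.

Lemma yule_expect_cst c : yule_expect (fun _ _ => c) = c.
Proof.
have -> : yule_expect (fun _ _ => c) = (\sum_par prod_weight parent_weight par) *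
    (\sum_mu prod_weight mutation_weight mu) * c.
  rewrite /yule_expect !big_distrl /=; apply: eq_bigr => par _.
  by rewrite mulr_sumr big_distrl; apply: eq_bigr => mu _; rewrite yule_weightE.
rewrite (sum_prod_weight sum_parent_weight) (sum_prod_weight sum_mutation_weight).
by rewrite !mul1r.
Qed.

Lemma yule_expectZ c F :
  yule_expect (fun par mu => c * F par mu) = c * yule_expect F.
Proof.
rewrite /yule_expect mulr_sumr; apply: eq_bigr => par _; rewrite mulr_sumr.
by apply: eq_bigr => mu _; rewrite mulrCA.
Qed.

Lemma eq_yule_expect F G :
  (forall par mu, parents_precede par -> F par mu = G par mu) ->
  yule_expect F = yule_expect G.
Proof.
move=> eqFG; apply: eq_bigr => par _; apply: eq_bigr => mu _.
have [->|w_neq0] := eqVneq (yule_weight r par mu) 0; first by rewrite !mul0r.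
by rewrite eqFG //; apply: yule_weight_parents_precede w_neq0.
Qed.

Lemma yule_expect_resample (n : 'I_N) F : yule_expect F =
  yule_expect (fun par mu => \sum_p parent_weight n p *
    \sum_b mutation_weight n b * F (ffun_upd par n p) (ffun_upd mu n b)).
Proof.
pose P := prod_weight parent_weight.
pose M := prod_weight mutation_weight.
have expectE G : yule_expect G = \sum_par P par * \sum_mu M mu * G par mu.
  apply: eq_bigr => par _; rewrite mulr_sumr; apply: eq_bigr => mu _.
  by rewrite yule_weightE mulrA.
rewrite !expectE (sum_prod_weight_resample n (fun par => \sum_mu M mu * F par mu));
  last exact: sum_parent_weight.
apply: eq_bigr => par _; congr (_ * _).
under eq_bigr => p _ do rewrite (sum_prod_weight_resample n
    (fun mu => F (ffun_upd par n p) mu)) ?sum_mutation_weight // mulr_sumr.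
rewrite exchange_big /=; apply: eq_bigr => mu _; rewrite mulr_sumr.
by apply: eq_bigr => p _; rewrite mulrCA.
Qed.

Lemma yule_expect_type_count_S (g : nat -> R) K n : (0 < n)%N -> (n < N)%N ->
  yule_expect (fun par mu => g (type_count par mu K n.+1)) =
  yule_expect (fun par mu => \sum_(p : 'I_N) (p < n)%N%:R / n%:R *
    (r * g (type_count par mu K n + (n == K))%N +
     (1 - r) * g (type_count par mu K n + (founder par mu N p == K :> nat))%N)).
Proof.
move=> n_gt0 lt_nN; rewrite (yule_expect_resample (Ordinal lt_nN)).
apply: eq_yule_expect => par mu par_lt; apply: eq_bigr => p _.
rewrite parent_weightE //=; case: ltnP => lt_pn; last by rewrite !mul0r.
congr (_ * _); rewrite big_bool !mutation_weightE //= !(type_count_S _ _ _ lt_nN).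
by rewrite !type_count_upd // !founder_upd_at.
Qed.

Hypotheses (r_ge0 : 0 <= r) (r_le1 : r <= 1).

Lemma yule_weight_ge0 par mu : 0 <= yule_weight r par mu.
Proof.
rewrite yule_weightE; apply: mulr_ge0; apply: prodr_ge0 => i _.
  by rewrite /parent_weight; case: ifP => _ //; apply: divr_ge0.
by rewrite /mutation_weight; case: ifP => _ //; case: (mu i); rewrite ?subr_ge0.
Qed.

Lemma ler_yule_expect F G :
  (forall par mu, F par mu <= G par mu) -> yule_expect F <= yule_expect G.
Proof.
move=> leFG; apply: ler_sum => par _; apply: ler_sum => mu _.
by apply: ler_wpM2l; [apply: yule_weight_ge0 | apply: leFG].
Qed.

End YuleExpectation.

Definition rising (x m : nat) : nat := \prod_(i < m) (x + i).

Lemma rising0n m : (0 < m)%N -> rising 0 m = 0%N.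
Proof. by case: m => // m _; rewrite /rising big_ord_recl. Qed.

Lemma rising1n m : rising 1 m = m`!.
Proof.
elim: m => [|m IH]; first by rewrite /rising big_ord0.
by rewrite /rising big_ord_recr /= -/(rising 1 m) IH factS mulnC add1n.
Qed.

Lemma mul_risingSn x m : (x * rising x.+1 m = rising x m * (x + m))%N.
Proof.
transitivity (\prod_(i < m.+1) (x + i))%N; last by rewrite big_ord_recr.
by rewrite big_ord_recl addn0; congr (_ * _)%N; apply: eq_bigr => i _; rewrite addSnnS.
Qed.

Lemma leq_exp_rising x m : (x ^ m <= rising x m)%N.
Proof.
elim: m => [|m IH]; first by rewrite /rising big_ord0.
by rewrite /rising big_ord_recr expnSr leq_mul // leq_addr.
Qed.

Lemma indicator_le_rising (R : realFieldType) (q : R) x m : 0 < q ->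
  ((q <= x%:R)%R)%:R <= (rising x m)%:R / q ^+ m.
Proof.
move=> q_gt0; have qm_gt0 : 0 < q ^+ m by apply: exprn_gt0.
have [le_qx|_] /= := boolP (q <= x%:R); last by rewrite divr_ge0 // ltW.
rewrite ler_pdivlMr // mul1r; apply: le_trans (_ : x%:R ^+ m <= _).
  by apply: lerXn2r; rewrite // nnegrE ltW // (lt_le_trans q_gt0).
by rewrite -natrX ler_nat leq_exp_rising.
Qed.

Definition type_moment (R : realType) (r : R) N K m n : R :=
  yule_expect r (fun par mu => (rising (@type_count N par mu K n) m)%:R).

Section TypeMoments.
Variables (R : realType) (r : R) (N K m : nat).

Lemma type_moment_found : (0 < K)%N -> (K < N)%N -> (0 < m)%N ->
  type_moment r N K m K.+1 = r * m`!%:R.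
Proof.
move=> K_gt0 lt_KN m_gt0.
pose g x := (rising x m)%:R : R.
rewrite /type_moment (yule_expect_type_count_S r g K K_gt0 lt_KN) eqxx.
rewrite -[RHS](yule_expect_cst r N); apply: eq_yule_expect => par mu par_lt.
rewrite type_count_self // -[RHS](@sum_ord_lt_div _ N K) ?K_gt0 ?(ltnW lt_KN) //.
apply: eq_bigr => p _; case: ltnP => lt_pK; last by rewrite !mul0r.
have /negbTE -> : founder par mu N p != K :> nat.
  by rewrite neq_ltn (leq_ltn_trans (founder_le mu par_lt N p)).
by rewrite /g rising0n // rising1n mulr0 addr0.
Qed.

Lemma type_moment_S n : (K < n)%N -> (n < N)%N ->
  type_moment r N K m n.+1 = (1 + (1 - r) * m%:R / n%:R) * type_moment r N K m n.
Proof.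
move=> lt_Kn lt_nN; have n_gt0 : (0 < n)%N by apply: leq_ltn_trans lt_Kn.
pose g x := (rising x m)%:R : R.
rewrite /type_moment (yule_expect_type_count_S r g K n_gt0 lt_nN) -yule_expectZ.
apply: eq_yule_expect => par mu _; rewrite (gtn_eqF lt_Kn) addn0.
set X := type_count par mu K n; set f := founder par mu N.
(* Exactly X of the n candidate parents have type K, and
   X * rising X.+1 m = rising X m * (X + m). *)
have parents : \sum_(p : 'I_N) (p < n)%N%:R * g (X + (f p == K :> nat))%N
    = (n + m)%N%:R * g X.
  transitivity (\sum_(p : 'I_N) ((p < n)%N%:R * g X +
      ((p < n)%N && (f p == K :> nat))%:R * (g X.+1 - g X))).
    apply: eq_bigr => p _; case: (p < n)%N; case: (_ == _) => /=;
      by rewrite ?addn0 ?addn1; ring.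
  rewrite big_split /= -!big_distrl /= sum_ord_lt ?(ltnW lt_nN) // sum_nat_indicator.
  rewrite (_ : #|_| = X) // mulrBr /g -!natrM mul_risingSn.
  by rewrite !natrM !natrD; ring.
transitivity (\sum_(p : 'I_N) (p < n)%N%:R / n%:R * (r * g X) +
    (1 - r) / n%:R * \sum_(p : 'I_N) (p < n)%N%:R * g (X + (f p == K :> nat))%N).
  by rewrite mulr_sumr -big_split; apply: eq_bigr => p _ /=; ring.
have n_neq0 : n%:R != 0 :> R by rewrite pnatr_eq0 -lt0n.
by rewrite sum_ord_lt_div ?n_gt0 ?(ltnW lt_nN) // parents natrD; field.
Qed.

End TypeMoments.

Lemma powR_pred_growth (R : realType) (a x : R) : 0 <= a -> 1 < x ->
  (1 + a / x) * (x - 1) `^ a <= x `^ a.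
Proof.
move=> a_ge0 x_gt1; have x_gt0 : 0 < x by apply: lt_trans x_gt1.
have y_gt0 : 0 < 1 - x^-1 by rewrite subr_gt0 invf_lt1.
have -> : x - 1 = x * (1 - x^-1) by rewrite mulrBr mulr1 divff ?gt_eqF.
rewrite powRM ?(ltW x_gt0) ?(ltW y_gt0) // mulrCA ler_piMr ?powR_ge0 //.
(* 1 + a / x <= e^(a/x) and (1 - 1/x)^a <= e^(-a/x). *)
apply: le_trans (_ : expR (a / x) * expR (a * - x^-1) <= _); last first.
  by rewrite -expRD mulrN subrr expR0.
apply: ler_pM; rewrite ?powR_ge0 ?expR_ge1Dx //.
  by apply: addr_ge0 => //; apply: divr_ge0 => //; apply: ltW.
rewrite /powR gt_eqF // ler_expR ler_wpM2l // le_ln1Dx //.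
by rewrite ltrN2 invf_lt1.
Qed.

Section TypeMomentBound.
Variables (R : realType) (r : R) (N K m : nat).
Hypotheses (r_le1 : r <= 1) (K_gt0 : (0 < K)%N) (m_gt0 : (0 < m)%N).

Let a := (1 - r) * m%:R.

Lemma type_moment_le n : (K < n)%N -> (n <= N)%N ->
  type_moment r N K m n * K%:R `^ a <= m`!%:R * (n%:R - 1) `^ a.
Proof.
have a_ge0 : 0 <= a by rewrite mulr_ge0 ?subr_ge0.
elim: n => [//|n IH] lt_Kn le_nN; rewrite -natr1 addrK.
case: (ltngtP K n) => [lt_Kn'|lt_nK|eq_Kn]; last first.
- subst n; rewrite type_moment_found //.
  by apply: ler_wpM2r; rewrite ?powR_ge0 // ler_piMl.
- by move: lt_Kn; rewrite ltnS leqNgt lt_nK.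
rewrite type_moment_S //.
apply: le_trans (_ : (1 + a / n%:R) * (m`!%:R * (n%:R - 1) `^ a) <= _).
  rewrite -[_ * _ * _ `^ a]mulrA; apply: ler_wpM2l; last exact: IH (ltnW le_nN).
  by rewrite addr_ge0 ?divr_ge0.
rewrite mulrCA; apply: ler_wpM2l => //; apply: powR_pred_growth => //.
by rewrite ltr1n (leq_ltn_trans K_gt0).
Qed.

End TypeMomentBound.

Lemma yule_prob_Rkn_large_le (R : realType) (r : R) N K m :
  0 < r -> r < 1 -> (0 < K)%N -> (K < N)%N -> 2 <= (1 - r) * m%:R ->
  @yule_prob R r N (fun par mu => powR N%:R (1 - r) <= (Rkn par mu K.+1)%:R)
  <= m`!%:R / K%:R ^+ 2.
Proof.
move=> r_gt0 r_lt1 K_gt0 lt_KN le2a.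
have m_gt0 : (0 < m)%N.
  by rewrite lt0n; apply: contraTneq le2a => ->; rewrite mulr0 -ltNge ltr0n.
set a := (1 - r) * m%:R in le2a.
have N_gt0 : (0 : R) < N%:R by rewrite ltr0n (ltn_trans K_gt0).
have le_expect := ler_yule_expect (ltW r_gt0) (ltW r_lt1).
set q := N%:R `^ (1 - r).
have qm_gt0 : 0 < q ^+ m by rewrite exprn_gt0 ?powR_gt0.
have moment_ge0 : 0 <= type_moment r N K m N.
  by rewrite -(yule_expect_cst r N 0); apply: le_expect.
apply: le_trans (_ : type_moment r N K m N / q ^+ m <= _).
  rewrite mulrC -yule_expectZ; apply: le_expect => par mu.
  by rewrite Rkn_type_count mulrC indicator_le_rising ?powR_gt0.
rewrite ler_pdivrMr // mulrAC ler_pdivlMr ?exprn_gt0 ?ltr0n //.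
rewrite -powR_mulrn ?powR_ge0 // -powRrM -/a.
apply: le_trans (_ : type_moment r N K m N * K%:R `^ a <= _).
  apply: ler_wpM2l => //; rewrite -powR_mulrn ?ler0n //.
  by apply: ler_powR; rewrite ?ler1n.
apply: le_trans (type_moment_le (ltW r_lt1) K_gt0 m_gt0 lt_KN (leqnn N)) _.
apply: ler_wpM2l => //; apply: ge0_ler_powR.
- by rewrite mulr_ge0 // subr_ge0 ltW.
- by rewrite nnegrE subr_ge0 ler1n (ltn_trans K_gt0).
- by rewrite nnegrE ltW.
- by rewrite gerDl lerN10.
Qed.

Lemma sum_inv_sqr_le (R : realFieldType) M n : (0 < M)%N -> (M < n)%N ->
  \sum_(M.+1 <= k < n) (k%:R ^+ 2)^-1 <= M%:R^-1 - n.-1%:R^-1 :> R.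
Proof.
move=> M_gt0; elim: n => [//|n IH]; rewrite ltnS leq_eqVlt => /predU1P[<-|lt_Mn].
  by rewrite big_geq // subrr.
have n_gt1 : (1 < n)%N by apply: leq_ltn_trans M_gt0 lt_Mn.
have x_gt0 : (0 : R) < n.-1%:R by rewrite ltr0n -subn1 subn_gt0.
have nE : n%:R = n.-1%:R + 1 :> R by rewrite natr1 prednK // ltnW.
have step : (n%:R ^+ 2)^-1 <= n.-1%:R^-1 - n%:R^-1 :> R.
  rewrite nE -subr_ge0 (_ : _ - _ - _ = (n.-1%:R * (n.-1%:R + 1) ^+ 2)^-1).
    by rewrite invr_ge0 mulr_ge0 ?exprn_ge0 ?addr_ge0 ?ltW.
  by field; rewrite ?gt_eqF ?ltr_wpDl ?ltW.
rewrite big_nat_recr //=.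
by apply: le_trans (lerD (IH lt_Mn) step) _; rewrite addrA subrK.
Qed.

Theorem lemma5p1 (R : realType) (r : R) (hr0 : 0 < r) (hr1 : r < 1)
  (eps : R) (heps : 0 < eps) :
  exists L : nat, (0 < L)%N /\
    exists N0 : nat, forall N : nat, (N0 <= N)%N ->
      \sum_(L <= k < N.+1)
         @yule_prob R r N (fun par mu => powR (N%:R) (1 - r) <= (Rkn par mu k)%:R)
      < eps.
Proof.
have c_gt0 : 0 < 1 - r by rewrite subr_gt0.
pose m := Num.Def.archi_bound (2 / (1 - r)).
have le2_cm : 2 <= (1 - r) * m%:R.
  by rewrite mulrC -ler_pdivrMr //; apply/ltW/archi_boundP; rewrite divr_ge0 // ltW.
pose M := (Num.Def.archi_bound (m`!%:R / eps)).+1.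
have lt_M : m`!%:R / eps < M%:R.
  apply: lt_le_trans (archi_boundP _) _; first by rewrite divr_ge0 // ltW.
  by rewrite ler_nat.
exists M.+2; split => //; exists M.+1 => N lt_MN; rewrite big_add1 /=.
apply: le_lt_trans (_ : _ <= \sum_(M.+1 <= K < N) m`!%:R * (K%:R ^+ 2)^-1) _.
  apply: ler_sum_nat => K /andP[lt_MK lt_KN].
  by apply: yule_prob_Rkn_large_le => //; apply: leq_trans lt_MK.
rewrite -mulr_sumr; apply: le_lt_trans (_ : _ <= m`!%:R * M%:R^-1) _.
  apply: ler_wpM2l => //; apply: le_trans (sum_inv_sqr_le _ _ _) _ => //.
  by rewrite gerBl invr_ge0.
by rewrite ltr_pdivrMr ?ltr0n // -ltr_pdivrMl // mulrC.
Qed.
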